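(* Let $\lambda_1,\lambda_2$, $\Omega$, $\varphi$, $f$ be as in the context, with $(c,\theta)\in\Omega$, and define $g:\mathbb{C}\to\mathbb{C}$ by $g(u+iv)=e^{f(u)+cv}e^{i\varphi(u)}$. Then $$g_{z\bar z}=\frac{2\left[\lambda_1^2(g+\bar g)-\lambda_2^2(g-\bar g)\right]}{\lambda_1^2(g+\bar g)^2-\lambda_2^2(g-\bar g)^2}\,g_zg_{\bar z},$$ and the Hopf differential of $g$ is $Q=\frac18e^{-i\theta}\,dz^2$.
   Context: Either $\lambda_1>\lambda_2>0$ or $\lambda_1=\lambda_2=1$. For $c>0$ put $\theta_c^+=\pi$ if $c>\sqrt2\lambda_1$ and $\theta_c^+=\arccos(1-c^2/\lambda_1^2)$ if $0<c\le\sqrt2\lambda_1$; $\Omega=\{(c,\theta): c>0,\ |\theta|<\theta_c^+\}$. For $(c,\theta)\in\Omega$: $D=\sin\theta/c$; $\varphi$ is the global solution of $\varphi'(u)=\sqrt{c^2+2\cos\theta\,B(u)-D^2B(u)^2}$, $\varphi(0)=0$, where $B(u)=\lambda_1^2\cos^2\varphi(u)+\lambda_2^2\sin^2\varphi(u)$; $f$ is the solution of $f'(u)=DB(u)$, $f(0)=0$. Here $z=u+iv$, $g_z=\frac12(g_u-ig_v)$, $g_{\bar z}=\frac12(g_u+ig_v)$, and the Hopf differential of $g$ is $Q=\frac{g_z\bar g_z}{\lambda_1^2(g+\bar g)^2-\lambda_2^2(g-\bar g)^2}dz^2$ with $\bar g_z=\partial_z(\bar g)$. *)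

From Stdlib Require Import Reals.
From Coquelicot Require Import Coquelicot.

Local Open Scope R_scope.

Definition admissible_lambdas (l1 l2 : R) : Prop :=
  (0 < l2 /\ l2 < l1) \/ (l1 = 1 /\ l2 = 1).

Definition theta_plus (l1 c : R) : R :=
  if Rlt_dec (sqrt 2 * l1) c then PI else acos (1 - c ^ 2 / l1 ^ 2).

Definition in_Omega (l1 c theta : R) : Prop :=
  0 < c /\ Rabs theta < theta_plus l1 c.

Definition Dconst (c theta : R) : R := sin theta / c.

Definition Bfun (l1 l2 : R) (phi : R -> R) (u : R) : R :=
  l1 ^ 2 * (cos (phi u)) ^ 2 + l2 ^ 2 * (sin (phi u)) ^ 2.

Definition phi_solution (l1 l2 c theta : R) (phi : R -> R) : Prop :=
  phi 0 = 0 /\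
  forall u : R, is_derive phi u
    (sqrt (c ^ 2 + 2 * cos theta * Bfun l1 l2 phi u
           - (Dconst c theta) ^ 2 * (Bfun l1 l2 phi u) ^ 2)).

Definition f_solution (l1 l2 c theta : R) (phi f : R -> R) : Prop :=
  f 0 = 0 /\
  forall u : R, is_derive f u (Dconst c theta * Bfun l1 l2 phi u).

Definition gfun (c : R) (phi f : R -> R) (z : Complex.C) : Complex.C :=
  Cmult (RtoC (exp (f (Re z) + c * Im z))) (cos (phi (Re z)), sin (phi (Re z))).

Definition pd_u (h : Complex.C -> Complex.C) (z : Complex.C) : Complex.C :=
  (Derive (fun t : R => Re (h (Re z + t, Im z))) 0,
   Derive (fun t : R => Im (h (Re z + t, Im z))) 0).

Definition pd_v (h : Complex.C -> Complex.C) (z : Complex.C) : Complex.C :=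
  (Derive (fun t : R => Re (h (Re z, Im z + t))) 0,
   Derive (fun t : R => Im (h (Re z, Im z + t))) 0).

Local Open Scope C_scope.

Definition d_z (h : Complex.C -> Complex.C) (z : Complex.C) : Complex.C :=
  / 2 * (pd_u h z - Ci * pd_v h z).

Definition d_zbar (h : Complex.C -> Complex.C) (z : Complex.C) : Complex.C :=
  / 2 * (pd_u h z + Ci * pd_v h z).

(* Coefficient of dz^2 in the Hopf differential of g:
   g_z (gbar)_z / (l1^2 (g + gbar)^2 - l2^2 (g - gbar)^2). *)
Definition hopf_coeff (l1 l2 : R) (g : Complex.C -> Complex.C) (z : Complex.C)
  : Complex.C :=
  d_z g z * d_z (fun w => Cconj (g w)) z
  / (RtoC (l1 ^ 2) * (g z + Cconj (g z)) ^ 2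
     - RtoC (l2 ^ 2) * (g z - Cconj (g z)) ^ 2).

From Pilot Require Import Defs.
From Stdlib Require Import Reals Lra Psatz FunctionalExtensionality.
From Coquelicot Require Import Coquelicot.

(* Every Wirtinger derivative of g = e^(f(u) + c v) e^(i phi(u)) met here has the form
   e^(f(u) + c v) w(u) ([exp_sep]), so all of them reduce to one-variable calculus in the
   log-derivative h = f' + i phi'.  The equation phi'^2 = c^2 + 2 cos(theta) B - D^2 B^2
   gives two identities: the Riccati-type relation B h' = i K (h^2 + c^2), with
   K = (l1^2 - l2^2) cos(phi) sin(phi), which yields the equation for g_(z zbar); and
   (h - i c)(conj h - i c) = 2 B e^(-i theta), which yields Q.  On Omega the right-hand
   side of the equation for phi is positive, so phi' = sqrt(...) is differentiable. *)

Local Open Scope R_scope.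

Lemma cos_Rabs (x : R) : cos (Rabs x) = cos x.
Proof. unfold Rabs; destruct (Rcase_abs x); [apply cos_neg | reflexivity]. Qed.

Lemma cos_gt_of_in_Omega (l1 c theta : R) :
  0 < l1 -> in_Omega l1 c theta -> 1 - c ^ 2 / l1 ^ 2 < cos theta.
Proof.
  intros Hl1 [Hc Htheta]; unfold theta_plus in Htheta.
  assert (Hsqrt2 : sqrt 2 * sqrt 2 = 2) by (apply sqrt_sqrt; lra).
  assert (Hratio : c ^ 2 / l1 ^ 2 * l1 ^ 2 = c ^ 2) by (field; lra).
  assert (0 < l1 ^ 2) by (apply pow_lt; lra).
  pose proof (sqrt_pos 2).
  destruct (Rlt_dec (sqrt 2 * l1) c) as [Hbig | Hsmall].
  - assert (sqrt 2 * l1 * (sqrt 2 * l1) < c * c)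
      by (apply Rmult_le_0_lt_compat; nra).
    assert (2 * l1 ^ 2 < c ^ 2) by nra.
    assert (2 < c ^ 2 / l1 ^ 2) by nra.
    pose proof (COS_bound theta); lra.
  - assert (c * c <= sqrt 2 * l1 * (sqrt 2 * l1))
      by (apply Rmult_le_compat; nra).
    assert (c ^ 2 <= 2 * l1 ^ 2) by nra.
    assert (c ^ 2 / l1 ^ 2 <= 2) by nra.
    assert (Hy : -1 <= 1 - c ^ 2 / l1 ^ 2 <= 1)
      by (split; [|assert (0 <= c ^ 2 / l1 ^ 2) by (apply Rle_mult_inv_pos; nra)]; lra).
    destruct (acos_bound (1 - c ^ 2 / l1 ^ 2)).
    rewrite <- cos_Rabs, <- (cos_acos _ Hy).
    apply cos_decreasing_1; auto using Rabs_pos; lra.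
Qed.

Lemma Bfun_bounds (l1 l2 : R) (phi : R -> R) (u : R) :
  0 < l2 <= l1 -> 0 < Bfun l1 l2 phi u <= l1 ^ 2.
Proof.
  intros Hl. unfold Bfun.
  pose proof (sin2_cos2 (phi u)) as Hpyth; unfold Rsqr in Hpyth.
  assert (l2 ^ 2 <= l1 ^ 2) by nra.
  assert (0 < l2 ^ 2) by nra.
  nra.
Qed.

Lemma admissible_lambdas_le (l1 l2 : R) : admissible_lambdas l1 l2 -> 0 < l2 <= l1.
Proof. intros [Hl | [-> ->]]; lra. Qed.

Definition phi_speed2 (c theta B : R) : R :=
  c ^ 2 + 2 * cos theta * B - Defs.Dconst c theta ^ 2 * B ^ 2.

Lemma phi_speed2_factor (c theta B : R) : c <> 0 ->
  phi_speed2 c theta B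
  = (c ^ 2 - B * (1 - cos theta)) * (c ^ 2 + B * (1 + cos theta)) / c ^ 2.
Proof.
  intros Hc. unfold phi_speed2, Defs.Dconst.
  pose proof (sin2_cos2 theta) as Hpyth; unfold Rsqr in Hpyth.
  assert (Hsin : sin theta ^ 2 = 1 - cos theta ^ 2) by nra.
  unfold Rdiv at 1; rewrite Rpow_mult_distr, Hsin.
  field; exact Hc.
Qed.

Lemma phi_speed2_pos (l1 c theta B : R) :
  0 < l1 -> in_Omega l1 c theta -> 0 < B <= l1 ^ 2 -> 0 < phi_speed2 c theta B.
Proof.
  intros Hl1 HOmega HB.
  pose proof (cos_gt_of_in_Omega l1 c theta Hl1 HOmega) as Hcos.
  destruct HOmega as [Hc _].
  assert (Hl1c : l1 ^ 2 * (1 - cos theta) < c ^ 2).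
  { assert (0 < l1 ^ 2) by (apply pow_lt; lra).
    assert (c ^ 2 / l1 ^ 2 * l1 ^ 2 = c ^ 2) by (field; lra).
    nra. }
  pose proof (COS_bound theta).
  rewrite phi_speed2_factor by lra.
  apply Rdiv_lt_0_compat; [apply Rmult_lt_0_compat |]; nra.
Qed.

Definition is_derive_C (w : R -> C) (u : R) (dw : C) : Prop :=
  is_derive (fun t => Re (w t)) u (Re dw) /\ is_derive (fun t => Im (w t)) u (Im dw).

Definition cis (t : R) : C := (cos t, sin t).

Lemma is_derive_C_const (k : C) (u : R) : is_derive_C (fun _ => k) u 0.
Proof. split; [exact (is_derive_const (Re k) u) | exact (is_derive_const (Im k) u)]. Qed.

Lemma is_derive_C_RtoC (a : R -> R) (u da : R) :
  is_derive a u da -> is_derive_C (fun t => RtoC (a t)) u (RtoC da).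
Proof. intros Ha; split; [exact Ha | exact (is_derive_const 0 u)]. Qed.

Lemma is_derive_C_pair (x y : R -> R) (u dx dy : R) :
  is_derive x u dx -> is_derive y u dy -> is_derive_C (fun t => (x t, y t)) u (dx, dy).
Proof. now split. Qed.

Lemma is_derive_C_mult (w v : R -> C) (u : R) (dw dv : C) :
  is_derive_C w u dw -> is_derive_C v u dv ->
  is_derive_C (fun t => w t * v t)%C u (dw * v u + w u * dv)%C.
Proof.
  intros [Hwr Hwi] [Hvr Hvi]; split.
  - replace (Re (dw * v u + w u * dv)%C)
      with (Re dw * Re (v u) + Re (w u) * Re dv - (Im dw * Im (v u) + Im (w u) * Im dv))
      by (unfold Re, Im; simpl; ring).
    exact (is_derive_minus _ _ _ _ _ (is_derive_mult _ _ _ _ _ Hwr Hvr Rmult_comm)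
             (is_derive_mult _ _ _ _ _ Hwi Hvi Rmult_comm)).
  - replace (Im (dw * v u + w u * dv)%C)
      with (Re dw * Im (v u) + Re (w u) * Im dv + (Im dw * Re (v u) + Im (w u) * Re dv))
      by (unfold Re, Im; simpl; ring).
    exact (is_derive_plus _ _ _ _ _ (is_derive_mult _ _ _ _ _ Hwr Hvi Rmult_comm)
             (is_derive_mult _ _ _ _ _ Hwi Hvr Rmult_comm)).
Qed.

Lemma is_derive_C_plus (w v : R -> C) (u : R) (dw dv : C) :
  is_derive_C w u dw -> is_derive_C v u dv -> is_derive_C (fun t => w t + v t)%C u (dw + dv)%C.
Proof.
  intros [Hwr Hwi] [Hvr Hvi].
  split; [exact (is_derive_plus _ _ _ _ _ Hwr Hvr) | exact (is_derive_plus _ _ _ _ _ Hwi Hvi)].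
Qed.

Lemma is_derive_C_conj (w : R -> C) (u : R) (dw : C) :
  is_derive_C w u dw -> is_derive_C (fun t => Cconj (w t)) u (Cconj dw).
Proof. intros [Hwr Hwi]; split; [exact Hwr | exact (is_derive_opp _ _ _ Hwi)]. Qed.

Lemma is_derive_C_cis (phi : R -> R) (u dphi : R) :
  is_derive phi u dphi -> is_derive_C (fun t => cis (phi t)) u (Ci * RtoC dphi * cis (phi u))%C.
Proof.
  intros Hphi; split; simpl.
  - replace ((0 * dphi - 1 * 0) * cos (phi u) - (0 * 0 + 1 * dphi) * sin (phi u))
      with (dphi * - sin (phi u)) by ring.
    exact (is_derive_comp cos phi u _ _ (is_derive_cos (phi u)) Hphi).
  - replace ((0 * dphi - 1 * 0) * sin (phi u) + (0 * 0 + 1 * dphi) * cos (phi u))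
      with (dphi * cos (phi u)) by ring.
    exact (is_derive_comp sin phi u _ _ (is_derive_sin (phi u)) Hphi).
Qed.

Lemma is_derive_shift (F : R -> R) (x d : R) :
  is_derive F x d -> is_derive (fun t => F (x + t)) 0 d.
Proof.
  intros HF.
  replace d with (1 * d) by ring.
  apply (is_derive_comp F (fun t => x + t)).
  - now rewrite Rplus_0_r.
  - auto_derive; [exact I | ring].
Qed.

Lemma pd_u_eq (h : C -> C) (z d : C) :
  is_derive_C (fun t => h (t, Im z)) (Re z) d -> pd_u h z = d.
Proof.
  intros [Hre Him]; unfold pd_u; destruct d as [dre dim].
  f_equal; apply is_derive_unique;
    [exact (is_derive_shift _ _ _ Hre) | exact (is_derive_shift _ _ _ Him)].
Qed.

Lemma pd_v_eq (h : C -> C) (z d : C) :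
  is_derive_C (fun t => h (Re z, t)) (Im z) d -> pd_v h z = d.
Proof.
  intros [Hre Him]; unfold pd_v; destruct d as [dre dim].
  f_equal; apply is_derive_unique;
    [exact (is_derive_shift _ _ _ Hre) | exact (is_derive_shift _ _ _ Him)].
Qed.

Definition exp_sep (a : R -> R) (c : R) (w : R -> C) (z : C) : C :=
  (RtoC (exp (a (Re z) + c * Im z)) * w (Re z))%C.

Lemma pd_u_exp_sep (a : R -> R) (c : R) (w : R -> C) (z : C) (da : R) (dw : C) :
  is_derive a (Re z) da -> is_derive_C w (Re z) dw ->
  pd_u (exp_sep a c w) z
  = (RtoC (exp (a (Re z) + c * Im z)) * (RtoC da * w (Re z) + dw))%C.
Proof.
  intros Ha Hw; apply pd_u_eq.
  assert (Hexp : is_derive (fun t => exp (a t + c * Im z)) (Re z)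
                   (exp (a (Re z) + c * Im z) * da)).
  { auto_derive; [now exists da |].
    replace (Derive (fun x : R => a x) (Re z)) with da by (symmetry; now apply is_derive_unique).
    ring. }
  pose proof (is_derive_C_mult _ _ _ _ _ (is_derive_C_RtoC _ _ _ Hexp) Hw) as H.
  rewrite RtoC_mult in H.
  replace (RtoC (exp (a (Re z) + c * Im z)) * (RtoC da * w (Re z) + dw))%C
    with (RtoC (exp (a (Re z) + c * Im z)) * RtoC da * w (Re z)
          + RtoC (exp (a (Re z) + c * Im z)) * dw)%C by ring.
  exact H.
Qed.

Lemma pd_v_exp_sep (a : R -> R) (c : R) (w : R -> C) (z : C) :
  pd_v (exp_sep a c w) z = (RtoC (exp (a (Re z) + c * Im z)) * (RtoC c * w (Re z)))%C.
Proof.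
  apply pd_v_eq.
  assert (Hexp : is_derive (fun t => exp (a (Re z) + c * t)) (Im z)
                   (exp (a (Re z) + c * Im z) * c)) by (auto_derive; [exact I | ring]).
  pose proof (is_derive_C_mult _ _ _ _ _ (is_derive_C_RtoC _ _ _ Hexp)
                (is_derive_C_const (w (Re z)) (Im z))) as H.
  rewrite RtoC_mult in H.
  replace (RtoC (exp (a (Re z) + c * Im z)) * (RtoC c * w (Re z)))%C
    with (RtoC (exp (a (Re z) + c * Im z)) * RtoC c * w (Re z)
          + RtoC (exp (a (Re z) + c * Im z)) * 0)%C by ring.
  exact H.
Qed.

Lemma d_z_exp_sep (a : R -> R) (c : R) (w : R -> C) (z : C) (da : R) (dw : C) :
  is_derive a (Re z) da -> is_derive_C w (Re z) dw ->
  d_z (exp_sep a c w) z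
  = (RtoC (exp (a (Re z) + c * Im z)) * (/ 2 * ((RtoC da - Ci * RtoC c) * w (Re z) + dw)))%C.
Proof.
  intros Ha Hw; unfold d_z.
  rewrite (pd_u_exp_sep _ _ _ _ _ _ Ha Hw), pd_v_exp_sep; ring.
Qed.

Lemma d_zbar_exp_sep (a : R -> R) (c : R) (w : R -> C) (z : C) (da : R) (dw : C) :
  is_derive a (Re z) da -> is_derive_C w (Re z) dw ->
  d_zbar (exp_sep a c w) z
  = (RtoC (exp (a (Re z) + c * Im z)) * (/ 2 * ((RtoC da + Ci * RtoC c) * w (Re z) + dw)))%C.
Proof.
  intros Ha Hw; unfold d_zbar.
  rewrite (pd_u_exp_sep _ _ _ _ _ _ Ha Hw), pd_v_exp_sep; ring.
Qed.

Lemma pair_RtoC (x y : R) : (x, y) = (RtoC x + Ci * RtoC y)%C.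
Proof. apply injective_projections; simpl; ring. Qed.

Lemma Cconj_exp_sep (a : R -> R) (c : R) (w : R -> C) :
  (fun z => Cconj (exp_sep a c w z)) = exp_sep a c (fun u => Cconj (w u)).
Proof.
  apply functional_extensionality; intro z.
  apply injective_projections; simpl; ring.
Qed.

Lemma cis_mul_conj (t : R) : (cis t * Cconj (cis t) = 1)%C.
Proof.
  pose proof (sin2_cos2 t) as Hpyth; unfold Rsqr in Hpyth.
  apply injective_projections; simpl; lra.
Qed.

Lemma cis_mul_weights (l1 l2 : R) (phi : R -> R) (u : R) :
  (cis (phi u) * ((l1 ^ 2 * cos (phi u))%R, (- (l2 ^ 2 * sin (phi u)))%R)
   = RtoC (Bfun l1 l2 phi u) + Ci * RtoC ((l1 ^ 2 - l2 ^ 2) * cos (phi u) * sin (phi u))%R)%C.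
Proof. apply injective_projections; unfold Bfun; simpl; ring. Qed.

Lemma gfun_numerator (l1 l2 c : R) (phi f : R -> R) (z : C) :
  (RtoC (l1 ^ 2) * (gfun c phi f z + Cconj (gfun c phi f z))
   - RtoC (l2 ^ 2) * (gfun c phi f z - Cconj (gfun c phi f z))
   = 2 * RtoC (exp (f (Re z) + c * Im z))
       * ((l1 ^ 2 * cos (phi (Re z)))%R, (- (l2 ^ 2 * sin (phi (Re z))))%R))%C.
Proof. apply injective_projections; simpl; ring. Qed.

Lemma gfun_denominator (l1 l2 c : R) (phi f : R -> R) (z : C) :
  (RtoC (l1 ^ 2) * (gfun c phi f z + Cconj (gfun c phi f z)) ^ 2
   - RtoC (l2 ^ 2) * (gfun c phi f z - Cconj (gfun c phi f z)) ^ 2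
   = 4 * RtoC (exp (f (Re z) + c * Im z)) ^ 2 * RtoC (Bfun l1 l2 phi (Re z)))%C.
Proof. apply injective_projections; unfold Bfun; simpl; ring. Qed.

Lemma wirtinger_identity_of_riccati (E B K : R) (e n h dh a : C) :
  E <> 0 -> B <> 0 -> (e * n = RtoC B + Ci * RtoC K)%C ->
  (RtoC B * dh = Ci * RtoC K * ((h - a) * (h + a)))%C ->
  (RtoC E * (/ 4 * ((h - a) * (h + a) + dh) * e)
   = 2 * (2 * RtoC E * n) / (4 * RtoC E ^ 2 * RtoC B)
     * (RtoC E * (/ 2 * (h - a) * e)) * (RtoC E * (/ 2 * ((h + a) * e))))%C.
Proof.
  intros HE HB Hen Hriccati.
  assert (HEC : RtoC E <> 0%C) by (intros H; apply HE, RtoC_inj, H).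
  assert (HBC : RtoC B <> 0%C) by (intros H; apply HB, RtoC_inj, H).
  transitivity (RtoC E / 4 * e * ((e * n) * ((h - a) * (h + a))) / RtoC B)%C;
    [| field; auto].
  rewrite Hen.
  replace dh with (Ci * RtoC K * ((h - a) * (h + a)) / RtoC B)%C
    by (rewrite <- Hriccati; field; exact HBC).
  field; exact HBC.
Qed.

Lemma hopf_ratio_of_conj_product (E B : R) (e h a w : C) :
  E <> 0 -> B <> 0 -> (e * Cconj e = 1)%C ->
  ((h - a) * (Cconj h - a) = 2 * RtoC B * w)%C ->
  (RtoC E * (/ 2 * (h - a) * e) * (RtoC E * (/ 2 * (Cconj h - a) * Cconj e))
   / (4 * RtoC E ^ 2 * RtoC B) = / 8 * w)%C.
Proof.
  intros HE HB He Hh.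
  assert (HEC : RtoC E <> 0%C) by (intros H; apply HE, RtoC_inj, H).
  assert (HBC : RtoC B <> 0%C) by (intros H; apply HB, RtoC_inj, H).
  transitivity ((e * Cconj e) * ((h - a) * (Cconj h - a)) / (16 * RtoC B))%C;
    [field; auto |].
  rewrite He, Hh; field; exact HBC.
Qed.

Section PhiEquation.

Variables (l1 l2 c theta : R) (phi f : R -> R).
Hypotheses (Hl : admissible_lambdas l1 l2) (HOmega : in_Omega l1 c theta)
  (Hphi : phi_solution l1 l2 c theta phi) (Hf : f_solution l1 l2 c theta phi f).

Local Notation B := (Bfun l1 l2 phi).
Local Notation D := (Defs.Dconst c theta).
Local Notation speed u := (sqrt (phi_speed2 c theta (B u))).
Local Notation K u := ((l1 ^ 2 - l2 ^ 2) * cos (phi u) * sin (phi u)).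
(* (log g)_u = f' + i phi' *)
Local Notation logder u := (D * B u, speed u).
Local Notation dlogder u := (-2 * D * K u * speed u, 2 * K u * (D ^ 2 * B u - cos theta)).

Lemma phi_speed2_Bfun_pos (u : R) : 0 < phi_speed2 c theta (B u).
Proof.
  destruct (admissible_lambdas_le _ _ Hl) as [Hl2 Hl21].
  apply (phi_speed2_pos l1); [lra | exact HOmega | now apply Bfun_bounds].
Qed.

Lemma phi_speed_sq (u : R) : speed u ^ 2 = phi_speed2 c theta (B u).
Proof. apply pow2_sqrt, Rlt_le, phi_speed2_Bfun_pos. Qed.

Lemma Bfun_derive (u : R) : is_derive B u (-2 * K u * speed u).
Proof.
  destruct Hphi as [_ Hphi'].
  unfold Bfun at 1; auto_derive; [repeat split; now exists (speed u) |].
  replace (Derive (fun x : R => phi x) u) with (speed u)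
    by (symmetry; now apply is_derive_unique).
  ring.
Qed.

Lemma phi_speed_derive (u : R) :
  is_derive (fun t => speed t) u (2 * K u * (D ^ 2 * B u - cos theta)).
Proof.
  assert (HQ : is_derive (fun t => phi_speed2 c theta (B t)) u
                 ((2 * cos theta - 2 * D ^ 2 * B u) * (-2 * K u * speed u))).
  { unfold phi_speed2 at 1; auto_derive; [repeat split; eexists; apply Bfun_derive |].
    replace (Derive (fun x : R => B x) u) with (-2 * K u * speed u)
      by (symmetry; apply is_derive_unique, Bfun_derive).
    ring. }
  pose proof (phi_speed2_Bfun_pos u) as Hpos.
  pose proof (sqrt_lt_R0 _ Hpos) as Hspeed.
  replace (2 * K u * (D ^ 2 * B u - cos theta))
    with ((2 * cos theta - 2 * D ^ 2 * B u) * (-2 * K u * speed u) / (2 * speed u))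
    by (field; lra).
  exact (is_derive_sqrt _ _ _ HQ Hpos).
Qed.

Lemma phi_derive (u : R) : is_derive phi u (speed u).
Proof. apply Hphi. Qed.

Lemma f_derive (u : R) : is_derive f u (D * B u).
Proof. apply Hf. Qed.

Lemma logder_derive (u : R) : is_derive_C (fun t => logder t) u (dlogder u).
Proof.
  apply is_derive_C_pair; [| apply phi_speed_derive].
  replace (-2 * D * K u * speed u) with (D * (-2 * K u * speed u)) by ring.
  apply is_derive_scal, Bfun_derive.
Qed.

Lemma logder_riccati (u : R) :
  (RtoC (B u) * dlogder u
   = Ci * RtoC (K u) * ((logder u - Ci * RtoC c) * (logder u + Ci * RtoC c)))%C.
Proof.
  pose proof (f_equal (Rmult (K u)) (phi_speed_sq u)) as Hspeed.
  set (s := speed u) in *; unfold phi_speed2 in Hspeed.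
  apply injective_projections; simpl; lra.
Qed.

Lemma logder_conj_product (u : R) :
  ((logder u - Ci * RtoC c) * (Cconj (logder u) - Ci * RtoC c)
   = 2 * RtoC (B u) * (cos theta, (- sin theta)%R))%C.
Proof.
  pose proof (phi_speed_sq u) as Hspeed.
  set (s := speed u) in *; unfold phi_speed2 in Hspeed.
  assert (HcD : c * D = sin theta) by (unfold Defs.Dconst; field; destruct HOmega; lra).
  apply injective_projections; simpl; nra.
Qed.

Local Notation E z := (RtoC (exp (f (Re z) + c * Im z))).

Lemma d_z_gfun (z : C) :
  (d_z (gfun c phi f) z
   = E z * (/ 2 * (logder (Re z) - Ci * RtoC c) * cis (phi (Re z))))%C.
Proof.
  change (gfun c phi f) with (exp_sep f c (fun u => cis (phi u))).
  rewrite (d_z_exp_sep _ _ _ _ _ _ (f_derive (Re z)) (is_derive_C_cis _ _ _ (phi_derive (Re z)))).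
  rewrite pair_RtoC; ring.
Qed.

Lemma d_zbar_gfun :
  d_zbar (gfun c phi f) = exp_sep f c (fun u => / 2 * ((logder u + Ci * RtoC c) * cis (phi u)))%C.
Proof.
  apply functional_extensionality; intro z.
  change (gfun c phi f) with (exp_sep f c (fun u => cis (phi u))).
  rewrite (d_zbar_exp_sep _ _ _ _ _ _ (f_derive (Re z)) (is_derive_C_cis _ _ _ (phi_derive (Re z)))).
  unfold exp_sep; rewrite pair_RtoC; ring.
Qed.

Lemma d_z_conj_gfun (z : C) :
  (d_z (fun w => Cconj (gfun c phi f w)) z
   = E z * (/ 2 * (Cconj (logder (Re z)) - Ci * RtoC c) * Cconj (cis (phi (Re z)))))%C.
Proof.
  change (gfun c phi f) with (exp_sep f c (fun u => cis (phi u))).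
  rewrite Cconj_exp_sep.
  rewrite (d_z_exp_sep _ _ _ _ _ _ (f_derive (Re z))
             (is_derive_C_conj _ _ _ (is_derive_C_cis _ _ _ (phi_derive (Re z))))).
  apply injective_projections; simpl; field.
Qed.

Lemma d_z_d_zbar_gfun (z : C) :
  (d_z (d_zbar (gfun c phi f)) z
   = E z * (/ 4 * ((logder (Re z) - Ci * RtoC c) * (logder (Re z) + Ci * RtoC c)
                   + dlogder (Re z)) * cis (phi (Re z))))%C.
Proof.
  pose proof (is_derive_C_mult _ _ _ _ _
    (is_derive_C_plus _ _ _ _ _ (logder_derive (Re z)) (is_derive_C_const (Ci * RtoC c) (Re z)))
    (is_derive_C_cis _ _ _ (phi_derive (Re z)))) as Hw.
  pose proof (is_derive_C_mult _ _ _ _ _ (is_derive_C_const (/ 2) (Re z)) Hw) as Hw2.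
  rewrite d_zbar_gfun, (d_z_exp_sep _ _ _ _ _ _ (f_derive (Re z)) Hw2).
  rewrite !pair_RtoC; field.
Qed.

End PhiEquation.

Local Open Scope C_scope.

Theorem proposition5p3 (l1 l2 c theta : R) (phi f : R -> R) :
  admissible_lambdas l1 l2 ->
  in_Omega l1 c theta ->
  phi_solution l1 l2 c theta phi ->
  f_solution l1 l2 c theta phi f ->
  let g := gfun c phi f in
  (forall z : Complex.C,
     d_z (d_zbar g) z =
     2 * (RtoC (l1 ^ 2) * (g z + Cconj (g z)) - RtoC (l2 ^ 2) * (g z - Cconj (g z)))
     / (RtoC (l1 ^ 2) * (g z + Cconj (g z)) ^ 2
        - RtoC (l2 ^ 2) * (g z - Cconj (g z)) ^ 2)
     * d_z g z * d_zbar g z) /\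
  (forall z : Complex.C,
     hopf_coeff l1 l2 g z = / 8 * (cos theta, (- sin theta)%R)).
Proof.
  intros Hl HOmega Hphi Hf g; subst g.
  assert (HB : forall u, Bfun l1 l2 phi u <> 0%R)
    by (intro u; apply Rgt_not_eq, Bfun_bounds, admissible_lambdas_le, Hl).
  assert (HE : forall z : C, exp (f (Re z) + c * Im z) <> 0%R)
    by (intro z; apply Rgt_not_eq, exp_pos).
  split; intro z.
  - rewrite (d_z_d_zbar_gfun l1 l2 c theta phi f) by assumption.
    rewrite (d_zbar_gfun l1 l2 c theta phi f), (d_z_gfun l1 l2 c theta phi f)
      by assumption.
    rewrite gfun_numerator, gfun_denominator; unfold exp_sep.
    eapply wirtinger_identity_of_riccati;
      [apply HE | apply HB | apply cis_mul_weights | now apply logder_riccati].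
  - unfold hopf_coeff.
    rewrite (d_z_gfun l1 l2 c theta phi f), (d_z_conj_gfun l1 l2 c theta phi f)
      by assumption.
    rewrite gfun_denominator.
    apply hopf_ratio_of_conj_product;
      [apply HE | apply HB | apply cis_mul_conj | now apply logder_conj_product].
Qed.
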